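(* Let $G$ be a finite simple $2$-connected graph and let $L$ be the maximum length of a cycle in $G$. Then $$1+\lceil\log_2 L\rceil\le {\rm td}(G)\le \binom{L-1}{2}+2.$$
   Context: The height of a rooted forest is the maximum number of vertices on a path from a root to a leaf. The closure of a rooted forest $F$ is the graph on $V(F)$ in which $xy$ is an edge iff $x$ is an ancestor of $y$ or $y$ is an ancestor of $x$. The tree-depth ${\rm td}(G)$ of a graph $G$ is the minimum height of a rooted forest $F$ such that $G$ is a subgraph of the closure of $F$. *)

From mathcomp Require Import all_boot.
Set Implicit Arguments. Unset Strict Implicit. Unset Printing Implicit Defensive.

Section Graphs.
Variable T : finType.

Definition simple_graph (e : rel T) : Prop := symmetric e /\ irreflexive e.

Definition del_vertex (e : rel T) (v : T) : rel T :=
  [rel x y | [&& e x y, x != v & y != v]].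

Definition connected_graph (e : rel T) : Prop := forall x y : T, connect e x y.

Definition two_connected (e : rel T) : Prop :=
  [/\ 2 < #|T|, connected_graph e &
      forall v x y : T, x != v -> y != v -> connect (del_vertex e v) x y].

Definition is_cycle_of_length (e : rel T) (s : seq T) (n : nat) : Prop :=
  [/\ uniq s, size s = n, 3 <= n & cycle e s].

Definition max_cycle_length (e : rel T) (L : nat) : Prop :=
  (exists s, is_cycle_of_length e s L) /\
  (forall s n, is_cycle_of_length e s n -> n <= L).

(* Rooted forests on T, given by a parent function (None = root). *)
Definition forest (p : {ffun T -> option T}) : bool :=
  [forall y, iter #|T| (obind p) (Some y) == None].

Definition anc (p : {ffun T -> option T}) (x y : T) : bool :=
  [exists k : 'I_#|T|.+1, (0 < k) && (iter k (obind p) (Some y) == Some x)].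

Definition fdepth (p : {ffun T -> option T}) (y : T) : nat :=
  #|[set x | anc p x y]|.+1.

Definition fheight (p : {ffun T -> option T}) : nat := \max_(y : T) fdepth p y.

Definition in_closure (e : rel T) (p : {ffun T -> option T}) : bool :=
  [forall x, forall y, e x y ==> (anc p x y || anc p y x)].

(* tree-depth: minimum height of a rooted forest whose closure contains G.
   (The default #|T| is never smaller than the min, since a path forest
   of height #|T| always exists.) *)
Definition td (e : rel T) : nat :=
  \big[minn/#|T|]_(p : {ffun T -> option T} | forest p && in_closure e p)
     fheight p.

End Graphs.

(* In a forest whose closure
   contains G every edge joins comparable vertices, so the shallowest vertex r
   of a path of G is an ancestor of the whole path.  Removing r leaves two
   subpaths, one with at least half of the remaining vertices; recursing there
   gives a vertex having at least ceil(log2 (n+1)) vertices of an n-vertex path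
   on its root path.  Applied to a longest cycle with its shallowest vertex
   removed, this yields a vertex of depth at least 1 + ceil(log2 L).

   Maximising the total
   depth among forests whose parent edges are edges of G produces a normal
   (depth-first) forest, whose closure contains G.  Fix a vertex y with root
   path spine 0, ..., spine h = y.  A detour from spine b to spine a < b is a
   path of G closing the spine segment between them into a cycle.  Using
   2-connectivity, a detour ending at spine a > 0 is extended to a strictly
   longer one ending at some spine a' < a; as the cycles have length at most L,
   the jumps a - a' are bounded by L - 1 minus the detour size, and summing
   them gives h <= C(L-1, 2) + 1. *)

From mathcomp Require Import all_boot zify.
Set Implicit Arguments. Unset Strict Implicit. Unset Printing Implicit Defensive.

Section ParentChains.
Variable T : finType.
Variable p : {ffun T -> option T}.

Definition climb k (y : T) : option T := iter k (obind p) (Some y).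

(* The parent of x, with roots taken to be their own parent. *)
Definition parent (x : T) : T := odflt x (p x).

(* The number of proper ancestors of y; fdepth p y is depth y + 1. *)
Definition depth (y : T) : nat := #|[set x | anc p x y]|.

Lemma climbS k y : climb k.+1 y = obind p (climb k y).
Proof. by []. Qed.

Lemma climb_None_le k j y : k <= j -> climb k y = None -> climb j y = None.
Proof. by move=> /subnK <- Hk; elim: (j - k) => //= i IH; rewrite IH. Qed.

Definition root_chain y n : Prop :=
  (forall k, k <= n -> climb k y = Some (iter k parent y)) /\
  p (iter n parent y) = None.

Lemma root_chain_end y n : root_chain y n -> forall k, n < k -> climb k y = None.
Proof.
case=> Hclimb Hroot k nk; apply: (@climb_None_le n.+1) => //.
by rewrite climbS (Hclimb n (leqnn n)) /= Hroot.
Qed.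

Lemma root_chain_exists y k : climb k y = None -> exists n, root_chain y n.
Proof.
move=> Hk.
have ex : exists n, climb n.+1 y == None.
  by case: k Hk => [//|k] Hk; exists k; apply/eqP.
case: (ex_minnP ex) => n /eqP Hn Hmin.
have Hclimb : forall j, j <= n -> climb j y = Some (iter j parent y).
  elim=> [|j IH] jn //.
  have : climb j.+1 y != None by apply: contraTneq jn => /eqP/Hmin; rewrite -ltnNge.
  rewrite climbS (IH (ltnW jn)) /= /parent.
  by case: (p _) => //= z _; rewrite iterS /parent.
by exists n; split=> //; move: Hn; rewrite climbS Hclimb.
Qed.

Lemma root_chain_inj y n i j :
  root_chain y n -> i <= n -> j <= n -> iter i parent y = iter j parent y -> i = j.
Proof.
move=> [Hclimb Hroot].
wlog ij : i j / i <= j.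
  by move=> W ni nj E; case: (leqP i j) => h; [exact: W | apply/esym/W => //; exact: ltnW].
move=> ni jn E; case: (ltngtP i j) ij => // lij _; exfalso.
have periodic : forall k, i <= k -> exists2 k', i <= k' < j & iter k parent y = iter k' parent y.
  elim/ltn_ind=> k IH ik.
  case: (ltnP k j) => kj; first by exists k; rewrite ?ik.
  have -> : iter k parent y = iter (k - j + i) parent y by rewrite -(subnK kj) !iterD E subnK.
  by apply: IH; lia.
have [k' /andP[_ k'j] E'] := periodic n (leq_trans (ltnW lij) jn).
have := Hclimb k'.+1 (leq_trans k'j jn).
by rewrite climbS (Hclimb k' (ltnW (leq_trans k'j jn))) /= -E' Hroot.
Qed.

Lemma root_chain_lt_card y n : root_chain y n -> n < #|T|.
Proof.
move=> C; have inj : injective (fun k : 'I_n.+1 => iter k parent y).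
  by move=> a b E; apply/val_inj/(root_chain_inj C) => //; rewrite -ltnS ltn_ord.
by have := leq_card _ inj; rewrite card_ord.
Qed.

Lemma climb_None_card y k : climb k y = None -> climb #|T| y = None.
Proof. by move=> /root_chain_exists [n C]; exact: (root_chain_end C (root_chain_lt_card C)). Qed.

Lemma root_chain_anc y n x :
  root_chain y n -> anc p x y = [exists k : 'I_n, iter k.+1 parent y == x].
Proof.
move=> C; have nT := root_chain_lt_card C; have [Hclimb _] := C.
apply/existsP/existsP.
  case=> k /andP[k0 /eqP E].
  have kn : k <= n.
    by rewrite leqNgt; apply/negP=> /(root_chain_end C) Hk; move: E; rewrite -/(climb k y) Hk.
  have kp := prednK k0.
  have kn' : k.-1 < n by rewrite -ltnS kp.
  have E' : iter k parent y = x by move: E; rewrite -/(climb k y) (Hclimb _ kn) => -[].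
  exists (Ordinal kn'); apply/eqP; rewrite -E'.
  exact: (f_equal (fun j => iter j parent y) kp).
case=> k /eqP E.
have kT : k.+1 < #|T|.+1 by rewrite ltnS; exact: leq_trans (ltn_ord k) (ltnW nT).
exists (Ordinal kT); apply/andP; split => //; apply/eqP.
by have := Hclimb _ (ltn_ord k); rewrite /climb => ->; rewrite E.
Qed.

Lemma root_chain_depth y n : root_chain y n -> depth y = n.
Proof.
move=> C; rewrite /depth.
have -> : [set x | anc p x y] = [set iter (val k).+1 parent y | k : 'I_n].
  apply/setP=> x; rewrite inE (root_chain_anc _ C).
  by apply/existsP/imsetP => -[k]; [move=> /eqP <-; exists k | move=> _ ->; exists k].
rewrite card_imset ?card_ord // => a b E.
by apply/val_inj/eq_add_S/(root_chain_inj C); rewrite ?ltn_ord.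
Qed.

Lemma forestP : reflect (forall y, climb #|T| y = None) (forest p).
Proof. by apply: (iffP forallP) => H y; apply/eqP; exact: H. Qed.

End ParentChains.

Section ForestAncestry.
Variable T : finType.
Variable p : {ffun T -> option T}.
Hypothesis p_forest : forest p.

Local Notation climb := (climb p).
Local Notation parent := (parent p).
Local Notation depth := (depth p).

Lemma depth_root_chain y : root_chain p y (depth y).
Proof.
have [n C] := root_chain_exists (elimT (forestP p) p_forest y).
by rewrite (root_chain_depth C).
Qed.

Lemma climb_le_depth k y : k <= depth y -> climb k y = Some (iter k parent y).
Proof. by have [H _] := depth_root_chain y; apply: H. Qed.

Lemma climb_gt_depth k y : depth y < k -> climb k y = None.
Proof. exact: (root_chain_end (depth_root_chain y)). Qed.

Lemma parent_iter_inj y i j :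
  i <= depth y -> j <= depth y -> iter i parent y = iter j parent y -> i = j.
Proof. exact: root_chain_inj (depth_root_chain y). Qed.

Lemma ancP x y :
  reflect (exists2 k, 0 < k <= depth y & iter k parent y = x) (anc p x y).
Proof.
rewrite (root_chain_anc x (depth_root_chain y)); apply: (iffP existsP).
  by case=> k /eqP <-; exists k.+1; rewrite ?ltn_ord.
case=> k /andP[k0 kd] <-; have kp := prednK k0.
have kd' : k.-1 < depth y by rewrite -ltnS kp.
exists (Ordinal kd'); apply/eqP.
exact: (f_equal (fun j => iter j parent y) kp).
Qed.

Lemma depth_climb y n : climb n y <> None -> climb n.+1 y = None -> depth y = n.
Proof.
move=> H1 H2; case: (ltngtP (depth y) n) => // h.
  by rewrite climb_gt_depth in H1.
by rewrite climb_le_depth in H2.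
Qed.

Lemma climb_iter n k y : k <= depth y -> climb n (iter k parent y) = climb (n + k) y.
Proof. by move=> kd; rewrite [RHS]/(climb _ _) iterD -/(climb k y) (climb_le_depth kd). Qed.

Lemma depth_iter y k : k <= depth y -> depth (iter k parent y) = depth y - k.
Proof.
move=> kd; apply: depth_climb; rewrite climb_iter //.
  by rewrite subnK // climb_le_depth.
by rewrite climb_gt_depth //; lia.
Qed.

Lemma p_parent y : 0 < depth y -> p y = Some (parent y).
Proof. by move=> h; have := climb_le_depth h. Qed.

Lemma p_iter_parent y k : k < depth y -> p (iter k parent y) = Some (iter k.+1 parent y).
Proof. by move=> kd; rewrite p_parent // depth_iter ?subn_gt0 // ltnW. Qed.

Lemma anc_depth x y : anc p x y -> depth x < depth y.
Proof. by case/ancP=> k /andP[k0 kd] <-; rewrite depth_iter //; lia. Qed.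

Definition le_anc x y : bool := (x == y) || anc p x y.

Lemma le_ancP x y :
  reflect (exists2 k, k <= depth y & iter k parent y = x) (le_anc x y).
Proof.
apply: (iffP orP).
  case=> [/eqP ->|/ancP[k /andP[_ kd] E]]; [by exists 0 | by exists k].
case=> [[|k]] kd E; [left; rewrite -E // | right; apply/ancP; exists k.+1 => //].
Qed.

Lemma le_ancE x y :
  le_anc x y -> depth x <= depth y /\ x = iter (depth y - depth x) parent y.
Proof.
case/le_ancP=> k kd <-; rewrite depth_iter //; split; first exact: leq_subr.
by rewrite subKn.
Qed.

Lemma le_anc_iter y k : k <= depth y -> le_anc (iter k parent y) y.
Proof. by move=> kd; apply/le_ancP; exists k. Qed.

Lemma le_anc_refl x : le_anc x x.
Proof. by rewrite /le_anc eqxx. Qed.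

Lemma le_anc_trans x y z : le_anc x y -> le_anc y z -> le_anc x z.
Proof.
case/le_ancP=> k kd Ex; case/le_ancP=> j jd Ey; subst x y.
apply/le_ancP; exists (k + j); last by rewrite iterD.
by move: kd; rewrite depth_iter //; lia.
Qed.

Lemma le_anc_chain a b y : le_anc a y -> le_anc b y -> depth a <= depth b -> le_anc a b.
Proof.
move=> /le_ancE[ay Ea] /le_ancE[by' Eb] ab.
apply/le_ancP; exists (depth b - depth a); first lia.
by rewrite [RHS]Ea [X in iter _ _ X]Eb -iterD; congr iter; lia.
Qed.

Lemma ancE x y : anc p x y = le_anc x y && (x != y).
Proof.
rewrite /le_anc; case: (eqVneq x y) => [->|] /=; last by rewrite andbT.
by apply/negbTE/negP => /anc_depth; rewrite ltnn.
Qed.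

End ForestAncestry.

Lemma sum_ltn (I : finType) (F G : I -> nat) i0 :
  (forall i, F i <= G i) -> F i0 < G i0 -> \sum_i F i < \sum_i G i.
Proof.
move=> H H0; rewrite (bigD1 i0) //= [X in _ < X](bigD1 i0) //=.
by rewrite -addSn leq_add // leq_sum.
Qed.

Section NormalForest.
Variable T : finType.
Variable e : rel T.
Hypothesis e_sym : symmetric e.
Hypothesis e_irr : irreflexive e.

Definition parent_edges (p : {ffun T -> option T}) : bool :=
  [forall x, forall z, (p x == Some z) ==> e z x].

Lemma parent_edgesP (p : {ffun T -> option T}) x z :
  parent_edges p -> p x = Some z -> e z x.
Proof. by move=> /forallP/(_ x)/forallP/(_ z)/implyP H E; apply: H; rewrite E. Qed.

(* The potential that is maximised to obtain a normal forest. *)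
Definition total_depth (p : {ffun T -> option T}) : nat := \sum_y fdepth p y.

(* Rehanging the subtree of u below v, when v is not a descendant of u and is
   at least as deep as u, gives a forest of strictly larger total depth. *)
Section Rehang.
Variable p : {ffun T -> option T}.
Hypothesis p_forest : forest p.
Variables u v : T.
Hypothesis u_neq_v : u != v.
Hypothesis u_not_anc_v : ~~ anc p u v.
Hypothesis depth_uv : depth p u <= depth p v.

Definition rehang : {ffun T -> option T} := [ffun x => if x == u then Some v else p x].

Local Notation q := rehang.

Lemma climb_rehang_out z : ~~ le_anc p u z -> forall k, climb q k z = climb p k z.
Proof.
move=> nz; elim=> [|k IH] //; rewrite !climbS IH.
case: (leqP k (depth p z)) => kd; last by rewrite climb_gt_depth.
rewrite climb_le_depth //= ffunE; case: eqP => // E.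
by move: nz; rewrite -E le_anc_iter.
Qed.

Lemma climb_rehang_in z : le_anc p u z ->
  climb q (depth p z - depth p u) z = Some u /\
  forall i, climb q ((depth p z - depth p u).+1 + i) z = climb p i v.
Proof.
move=> /(le_ancE p_forest) [dz Eu].
set k := depth p z - depth p u.
have below_u : forall j, j <= k -> climb q j z = Some (iter j (parent p) z).
  elim=> [|j IH] jk //.
  rewrite climbS IH ?(ltnW jk) //= ffunE; case: eqP => E.
    have h : j = k by apply: (parent_iter_inj p_forest (y := z)); [lia | lia | rewrite E].
    by move: jk; rewrite h ltnn.
  by rewrite p_iter_parent //; lia.
have at_u : climb q k z = Some u by rewrite below_u // -Eu.
split=> // i.
rewrite /climb addnC iterD -/(climb q k.+1 z) climbS at_u /= ffunE eqxx.
by rewrite -/(climb q i v) climb_rehang_out // /le_anc negb_or u_neq_v.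
Qed.

Lemma rehang_forest : forest q.
Proof.
apply/forestP => y; case: (boolP (le_anc p u y)) => h; last first.
  by rewrite climb_rehang_out //; exact: (elimT (forestP p) p_forest).
have [_ after_u] := climb_rehang_in h.
apply: (climb_None_card (k := (depth p y - depth p u).+1 + (depth p v).+1)).
by rewrite after_u climb_gt_depth.
Qed.

Lemma depth_rehang_in z : le_anc p u z ->
  depth q z = (depth p z - depth p u).+1 + depth p v.
Proof.
move=> h; have [_ after_u] := climb_rehang_in h.
apply: (depth_climb rehang_forest); first by rewrite after_u climb_le_depth.
by rewrite -addnS after_u climb_gt_depth.
Qed.

Lemma depth_rehang z : depth p z <= depth q z.
Proof.
case: (boolP (le_anc p u z)) => h.
  by rewrite depth_rehang_in //; have [dy _] := le_ancE p_forest h; lia.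
apply: eq_leq; apply: eq_card => x; rewrite !inE /anc.
by apply: eq_existsb => k; rewrite -/(climb p k z) -/(climb q k z) climb_rehang_out.
Qed.

Lemma total_depth_rehang : total_depth p < total_depth q.
Proof.
apply: (sum_ltn (i0 := u)) => [i|]; rewrite /fdepth -/(depth _ _) -/(depth _ _) ltnS.
  exact: depth_rehang.
by rewrite depth_rehang_in ?le_anc_refl //; lia.
Qed.

Lemma rehang_parent_edges : parent_edges p -> e u v -> parent_edges q.
Proof.
move=> H euv; apply/forallP=> x; apply/forallP=> z; apply/implyP.
rewrite ffunE; case: (x =P u) => [->|_]; first by move=> /eqP [<-]; rewrite e_sym.
by move=> /eqP; apply: parent_edgesP.
Qed.

End Rehang.

Lemma normal_forest_exists :
  exists p, [&& forest p, parent_edges p & in_closure e p].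
Proof.
pose p0 : {ffun T -> option T} := [ffun => None].
have P0 : forest p0 && parent_edges p0.
  apply/andP; split; last by apply/forallP=> x; apply/forallP=> z; rewrite ffunE.
  by apply/forestP => y; apply: (climb_None_card (k := 1)); rewrite /climb /= ffunE.
have [p /andP[p_forest p_edges] p_max] :=
  @arg_maxnP _ p0 (fun q => forest q && parent_edges q) total_depth P0.
exists p; rewrite p_forest p_edges /=.
have comparable : forall u v, e u v -> depth p u <= depth p v -> anc p u v || anc p v u.
  move=> u v euv duv; apply/negPn/negP; rewrite negb_or => /andP[nuv _].
  have uv : u != v by apply: contraTneq euv => ->; rewrite e_irr.
  have := p_max (rehang p u v).
  rewrite (rehang_forest p_forest uv nuv duv) rehang_parent_edges // => /(_ isT) le_qp.
  by have := total_depth_rehang p_forest uv nuv duv; rewrite ltnNge => /negP; apply.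
apply/forallP=> u; apply/forallP=> v; apply/implyP=> euv.
case: (leqP (depth p u) (depth p v)) => d; first exact: comparable.
by rewrite orbC; apply: comparable; [rewrite e_sym | exact: ltnW].
Qed.

End NormalForest.

Lemma last_iota_map (X : Type) (f : nat -> X) n :
  last (f 0) [seq f k | k <- iota 1 n] = f n.
Proof.
elim: n f => [|n IH] f //=.
by rewrite (iotaDl 1 1) -map_comp; exact: (IH (fun k => f k.+1)).
Qed.

Lemma path_rev_sym (X : Type) (r : rel X) : symmetric r ->
  forall x y s, path r x (rcons s y) -> path r y (rcons (rev s) x).
Proof.
move=> r_sym x y s H.
rewrite -rev_cons -(belast_rcons x s y) -{1}(last_rcons x s y) rev_path.
by rewrite (@eq_path _ _ r) // => a b; rewrite r_sym.
Qed.

Lemma connect_exit (X : finType) (r : rel X) (A : pred X) s t :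
  connect r s t -> A s -> ~~ A t -> exists v u, [/\ A v, ~~ A u & r v u].
Proof.
case/connectP=> q pq -> {t}; elim: q s pq => [|z q IH] s /=; first by move=> _ ->.
case/andP=> rsz pq As; case: (boolP (A z)) => Az; first exact: IH.
by move=> _; exists s, z.
Qed.

Section RootPath.
Variable T : finType.
Variable e : rel T.
Hypothesis e_sym : symmetric e.
Variable p : {ffun T -> option T}.
Hypothesis p_forest : forest p.
Hypothesis p_edges : parent_edges e p.
Hypothesis p_closure : in_closure e p.

Local Notation parent := (parent p).
Local Notation depth := (depth p).
Local Notation le_anc := (le_anc p).

Lemma e_parent z : 0 < depth z -> e z (parent z).
Proof. by move=> h; rewrite e_sym; apply: (parent_edgesP p_edges); exact: p_parent. Qed.

Lemma climb_path z n : n <= depth z -> path e z [seq iter k parent z | k <- iota 1 n].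
Proof.
elim: n z => [|n IH] z nd //=.
rewrite e_parent /=; last lia.
have IHp : path e (parent z) [seq iter k parent (parent z) | k <- iota 1 n].
  by apply: IH; rewrite (depth_iter p_forest (k := 1)) /=; lia.
rewrite [iota 2 n](iotaDl 1 1 n) -map_comp; congr path: IHp.
by apply: eq_map => k /=; rewrite -iterSr.
Qed.

Lemma closure_edge u v : e u v -> anc p u v || anc p v u.
Proof. by move: p_closure => /forallP/(_ u)/forallP/(_ v)/implyP; apply. Qed.

Variable y : T.
Local Notation h := (depth y).

(* spine i is the ancestor of y at depth i, so spine 0 is a root and
   spine h = y; below i v says that v lies in the subtree of spine i. *)
Definition spine i : T := iter (h - i) parent y.
Definition below i v : bool := le_anc (spine i) v.

Lemma depth_spine i : i <= h -> depth (spine i) = i.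
Proof. by move=> ih; rewrite /spine depth_iter ?leq_subr // subKn. Qed.

Lemma below_spine i j : i <= h -> j <= h -> below i (spine j) = (i <= j).
Proof.
move=> ih jh; apply/idP/idP; first by case/(le_ancE p_forest); rewrite !depth_spine.
move=> ij; apply: (le_anc_chain p_forest (y := y)); rewrite ?depth_spine //;
  exact: le_anc_iter (leq_subr _ _).
Qed.

Lemma spine_inj i j : i <= h -> j <= h -> spine i = spine j -> i = j.
Proof. by move=> ih jh E; rewrite -(depth_spine ih) -(depth_spine jh) E. Qed.

Lemma spine_edge i : i < h -> e (spine i) (spine i.+1).
Proof.
move=> ih; apply: (parent_edgesP p_edges).
rewrite /spine (p_iter_parent p_forest (_ : h - i.+1 < h)); last lia.
by have -> : (h - i.+1).+1 = h - i by lia.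
Qed.

Lemma below_mono i j v : i <= j -> j <= h -> below j v -> below i v.
Proof.
move=> ij jh; apply: (le_anc_trans p_forest (_ : below i (spine j))).
by rewrite below_spine //; lia.
Qed.

Lemma anc_spine u i : i <= h -> le_anc u (spine i) -> u = spine (depth u) /\ depth u <= i.
Proof.
move=> ih /(le_ancE p_forest)[du Eu]; rewrite depth_spine // in du Eu *; split=> //.
by rewrite {1}Eu /spine -iterD; congr iter; lia.
Qed.

Lemma edge_leaving_below i u v :
  i <= h -> below i v -> e u v -> ~~ below i u -> exists2 j, j < i & u = spine j.
Proof.
move=> ih iv euv niu.
have := closure_edge euv; rewrite !(ancE p_forest) => /orP[/andP[uv _]|/andP[vu _]];
  last by move: niu; rewrite /below (le_anc_trans p_forest iv vu).
case: (leqP i (depth u)) => d.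
  have : le_anc (spine i) u by apply: (le_anc_chain p_forest (y := v)); rewrite ?depth_spine.
  by rewrite /below in niu; move=> iu; rewrite iu in niu.
have : le_anc u (spine i)
  by apply: (le_anc_chain p_forest (y := v)) => //; rewrite depth_spine // ltnW.
by case/anc_spine => // E _; exists (depth u).
Qed.

Hypothesis two_conn : forall v a b : T, a != v -> b != v -> connect (del_vertex e v) a b.

(* Since removing spine a keeps G connected, some vertex below spine (a+1)
   is adjacent to a spine vertex strictly above spine a. *)
Lemma jump_above a : 0 < a -> a < h -> exists v j, [/\ below a.+1 v, j < a & e v (spine j)].
Proof.
move=> a0 ah.
have ne1 : spine a.+1 != spine a by apply/eqP=> /spine_inj; lia.
have ne0 : spine 0 != spine a by apply/eqP=> /spine_inj; lia.
have := connect_exit (A := below a.+1) (two_conn ne1 ne0).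
rewrite /below le_anc_refl -/(below _ _) below_spine // => /(_ isT isT).
case=> v [u [Sv nSu /and3P[evu _ nu]]].
have [j jl Ej] := edge_leaving_below ah Sv (etrans (e_sym u v) evu) nSu.
exists v, j; split=> //; last by rewrite -Ej.
rewrite ltn_neqAle -ltnS jl andbT; apply: contra_neq nu => E.
by rewrite Ej E.
Qed.

Definition spine_seg a n : seq T := [seq spine i | i <- iota a n].

Lemma spine_seg_path a n : a + n <= h -> path e (spine a) (spine_seg a.+1 n).
Proof.
elim: n a => [|n IH] a an //=.
by rewrite spine_edge; [apply: IH | ]; lia.
Qed.

Lemma last_spine_seg a n : last (spine a) (spine_seg a.+1 n) = spine (a + n).
Proof. by elim: n a => [|n IH] a /=; rewrite ?addn0 // IH addSnnS. Qed.

Lemma spine_segP z a n :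
  reflect (exists2 i, a <= i < a + n & z = spine i) (z \in spine_seg a n).
Proof.
by apply: (iffP mapP) => -[i ii ->]; exists i; rewrite // ?mem_iota // -mem_iota.
Qed.

Lemma uniq_spine_seg a n : a + n <= h.+1 -> uniq (spine_seg a n).
Proof.
move=> an; rewrite map_inj_in_uniq ?iota_uniq // => i j.
by rewrite !mem_iota => /andP[_ ih] /andP[_ jh]; apply: spine_inj; lia.
Qed.

(* A detour from spine b back up to spine a: a path R of G which, together
   with the spine segment from spine a to spine b, closes a cycle. *)
Definition detour a b (R : seq T) : Prop :=
  [/\ a < b, b <= h, uniq R, path e (spine b) (rcons R (spine a)) &
   [/\ b < h -> all (below b.+1) R, b = h -> R = [::] &
       b < h -> forall v j, below b.+1 v -> j < a -> ~~ e v (spine j)]].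

Lemma spine_notin_detour a b R i : detour a b R -> i <= b -> spine i \notin R.
Proof.
case=> ab bh _ _ [R_below R_nil _] ib.
move: bh; rewrite leq_eqVlt => /orP[/eqP/R_nil -> //|bh].
by apply: contraTN (R_below bh) => iR; apply/allPn; exists (spine i); rewrite ?below_spine //; lia.
Qed.

Variable L : nat.
Hypothesis cycle_le_L : forall s n, is_cycle_of_length e s n -> n <= L.

(* The cycle spine a, ..., spine b, R has length at most L. *)
Lemma detour_cycle a b R : detour a b R -> 0 < size R -> (b - a).+1 + size R <= L.
Proof.
move=> D R0; have [ab bh uR pR _] := D.
apply: (cycle_le_L (s := spine a :: (spine_seg a.+1 (b - a) ++ R))); split.
- have Eb : a.+1 + (b - a) = b.+1 by rewrite addSn subnKC // ltnW.
  rewrite cons_uniq mem_cat negb_or (spine_notin_detour D (ltnW ab)) andbT.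
  rewrite cat_uniq uR uniq_spine_seg ?Eb //= andbT; apply/andP; split.
    apply/spine_segP=> -[i]; rewrite Eb ltnS => /andP[ai ib] /spine_inj.
    have ih := leq_trans ib bh.
    by move=> /(_ (ltnW (leq_trans ai ih)) ih) ai'; rewrite ai' ltnn in ai.
  apply/hasP=> -[z zR] /spine_segP[i]; rewrite Eb ltnS => /andP[_ ib] E.
  by move: zR; rewrite E (negbTE (spine_notin_detour D ib)).
- by rewrite /= size_cat size_map size_iota; lia.
- lia.
rewrite /cycle rcons_cat cat_path spine_seg_path; last lia.
by rewrite last_spine_seg subnKC // ltnW.
Qed.

Lemma highest_jump a : 0 < a -> a < h ->
  exists a' w, [/\ below a.+1 w, e w (spine a'), a' < a &
    forall v j, below a.+1 v -> j < a' -> ~~ e v (spine j)].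
Proof.
move=> a0 ah; have [v0 [j0 [Sv0 j0a ev0]]] := jump_above a0 ah.
pose P j := [exists v, below a.+1 v && e v (spine j)].
have exP : exists j, P j by exists j0; apply/existsP; exists v0; rewrite Sv0 ev0.
case: (ex_minnP exP) => a' /existsP[w /andP[Sw ew]] a'_min.
exists a', w; split=> //.
  by apply: leq_ltn_trans (a'_min j0 _) j0a; apply/existsP; exists v0; rewrite Sv0 ev0.
move=> v j Sv ja; apply/negP=> evj.
have : a' <= j by apply: a'_min; apply/existsP; exists v; rewrite Sv evj.
by rewrite leqNgt ja.
Qed.

Lemma deepest_spine_above w i0 : i0 <= h -> below i0 w ->
  exists m, [/\ m <= h, below m w & forall i, i <= h -> below i w -> i <= m].
Proof.
move=> i0h Sw; have exQ : exists i, (i <= h) && below i w by exists i0; rewrite i0h.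
have bnd : forall i, (i <= h) && below i w -> i <= h by move=> i /andP[].
have [m /andP[mh Sm] m_max] := ex_maxnP exQ bnd.
by exists m; split=> // i ih Si; apply: m_max; rewrite ih.
Qed.

Definition climb_seq (z : T) n : seq T := [seq iter k parent z | k <- iota 0 n.+1].

(* Given a detour from spine b to spine a, with w and a' as in highest_jump
   and spine m as in deepest_spine_above, the walk
     spine a, R backwards, spine b, ..., spine (m+1), spine m, ..., w, spine a'
   is a detour from spine a to spine a' of larger size. *)
Section ExtendDetour.
Variables (a b m a' : nat) (R : seq T) (w : T).
Hypothesis R_detour : detour a b R.
Hypotheses (w_below : below a.+1 w) (w_jump : e w (spine a')) (a'_lt_a : a' < a).
Hypothesis a'_highest : forall v j, below a.+1 v -> j < a' -> ~~ e v (spine j).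
Hypotheses (m_le_h : m <= h) (w_below_m : below m w).
Hypothesis m_deepest : forall i, i <= h -> below i w -> i <= m.

Local Notation ascent := (climb_seq w (depth w - m)).
Local Notation R' := (rev (ascent ++ spine_seg m.+1 (b - m) ++ R)).

Lemma a_lt_m : a < m.
Proof. by have [ab bh _ _ _] := R_detour; apply: m_deepest; rewrite // (leq_trans ab). Qed.

(* w is not below spine (b+1): the detour invariant forbids vertices there
   to be adjacent to spine a' with a' < a. *)
Lemma m_le_b : m <= b.
Proof.
have [_ bh _ _ [_ _ R_highest]] := R_detour.
move: bh; rewrite leq_eqVlt => /orP[/eqP -> //|bh].
rewrite leqNgt; apply/negP=> bm.
by have := R_highest bh w a' (below_mono bm m_le_h w_below_m) a'_lt_a; rewrite w_jump.
Qed.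

Lemma spine_m : spine m = iter (depth w - m) parent w.
Proof. by have [dm Em] := le_ancE p_forest w_below_m; rewrite depth_spine // in dm Em. Qed.

Lemma mem_ascent z : z \in ascent -> le_anc z w /\ below m z.
Proof.
have [dm _] := le_ancE p_forest w_below_m; rewrite depth_spine // in dm.
case/mapP=> k; rewrite mem_iota => /andP[_ kK] ->; split.
  by apply: (le_anc_iter p_forest); lia.
rewrite /below spine_m (_ : depth w - m = (depth w - m - k) + k); last lia.
by rewrite iterD; apply: (le_anc_iter p_forest); rewrite (depth_iter p_forest); lia.
Qed.

Lemma spine_seg_range z :
  z \in spine_seg m.+1 (b - m) -> exists2 i, m < i <= b & z = spine i.
Proof. by move/spine_segP=> [i]; rewrite addSn subnKC ?m_le_b // ltnS; exists i. Qed.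

Lemma uniq_extended : uniq R'.
Proof.
have [_ bh uR _ [R_below R_nil _]] := R_detour.
rewrite rev_uniq cat_uniq; apply/and3P; split.
- rewrite map_inj_in_uniq ?iota_uniq // => i j; rewrite !mem_iota !add0n !ltnS.
  move=> /andP[_ ih] /andP[_ jh]; apply: (parent_iter_inj p_forest);
  by [apply: leq_trans ih (leq_subr _ _) | apply: leq_trans jh (leq_subr _ _)].
- apply/hasP=> -[z]; rewrite mem_cat => /orP[/spine_seg_range[i /andP[mi ib] ->]|zR].
    move=> /mem_ascent[iw _]; have := m_deepest (leq_trans ib bh) iw.
    by rewrite leqNgt mi.
  move=> /mem_ascent[zw _].
  move: bh; rewrite leq_eqVlt => /orP[/eqP/R_nil Rnil|bh]; first by rewrite Rnil in zR.
  have := m_deepest bh (le_anc_trans p_forest (allP (R_below bh) z zR) zw).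
  by rewrite ltnNge m_le_b.
rewrite cat_uniq uR uniq_spine_seg /= ?andbT; last by rewrite addSn subnKC ?m_le_b.
apply/hasP=> -[z zR] /spine_seg_range[i /andP[_ ib] E].
by move: zR; rewrite E (negbTE (spine_notin_detour R_detour ib)).
Qed.

Lemma path_extended : path e (spine a) (rcons R' (spine a')).
Proof.
have [_ bh _ pR _] := R_detour; have mb := m_le_b.
apply: (path_rev_sym e_sym); rewrite !rcons_cat /= (e_sym _ w) w_jump /= cat_path.
rewrite climb_path /=; last by rewrite leq_subr.
rewrite -[w]/(iter 0 parent w) last_iota_map -spine_m cat_path spine_seg_path;
  last by rewrite subnKC.
by rewrite last_spine_seg subnKC.
Qed.

Lemma below_extended : all (below a.+1) R'.
Proof.
have [_ bh _ _ [R_below R_nil _]] := R_detour; have am := a_lt_m.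
apply/allP=> z; rewrite mem_rev !mem_cat => /or3P[/mem_ascent[_ Sz]|zP|zR].
- exact: below_mono Sz.
- have [i /andP[mi ib] ->] := spine_seg_range zP.
  have ai : a < i := leq_trans am (ltnW mi).
  by rewrite below_spine // ?(leq_trans ib bh) ?(leq_trans ai (leq_trans ib bh)).
move: bh; rewrite leq_eqVlt => /orP[/eqP/R_nil Rnil|bh]; first by rewrite Rnil in zR.
apply: (below_mono (j := b.+1)) bh (allP (R_below bh) z zR).
by rewrite (leq_trans am (leq_trans m_le_b _)).
Qed.

Lemma detour_extend : detour a' a R' /\ size R < size R'.
Proof.
have [ab bh _ _ _] := R_detour.
split; last by rewrite size_rev !size_cat size_map size_iota; lia.
split; rewrite ?uniq_extended ?path_extended //; first lia.
by split=> [_|ah|_ v j Sv ja]; [exact: below_extended | lia | exact: a'_highest].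
Qed.

End ExtendDetour.

Lemma detour_step a b R : detour a b R -> 0 < a ->
  exists a' R', [/\ detour a' a R', a' < a & size R < size R'].
Proof.
move=> D a0; have [ab bh _ _ _] := D.
have [a' [w [Sw ew a'a a'_highest]]] := highest_jump a0 (leq_trans ab bh).
have [m [mh Sm m_deepest]] := deepest_spine_above (leq_trans ab bh) Sw.
have [D' sz] := detour_extend D Sw ew a'a a'_highest mh Sm m_deepest.
by exists a', (rev (climb_seq w (depth w - m) ++ spine_seg m.+1 (b - m) ++ R)).
Qed.

(* Each step climbs a - a' <= L - 1 - size R' levels while the detour grows,
   so the levels still to climb from a are bounded by a binomial coefficient. *)
Lemma detour_bound a b R : detour a b R -> a <= 'C(L.-1 - size R, 2).
Proof.
elim/ltn_ind: a b R => a IH b R D.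
have [->|a0] := posnP a; first exact: leq0n.
have [a' [R' [D' a'a sRR']]] := detour_step D a0.
have cyc := detour_cycle D' (leq_ltn_trans (leq0n _) sRR').
have IH' := IH a' a'a a R' D'.
have nR : (L.-1 - size R').+1 <= L.-1 - size R by lia.
apply: leq_trans (leq_bin2l 2 nR); rewrite binS bin1.
lia.
Qed.

(* The depth bound for y, starting from the detour formed by the last spine
   edge alone. *)
Lemma depth_le_binomial : depth y <= 'C(L.-1, 2) + 1.
Proof.
have [->|h0] := posnP h; first exact: leq0n.
have D : detour h.-1 h [::].
  split=> //; rewrite ?prednK //=.
  - have E : e (spine h.-1) (spine h.-1.+1) by apply: spine_edge; rewrite prednK.
    by rewrite prednK // in E; rewrite /= e_sym E.
  - by split=> //; rewrite ltnn.
by have := detour_bound D; rewrite subn0; lia.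
Qed.

End RootPath.

Section LowerBound.
Variable T : finType.
Variable e : rel T.
Hypothesis e_sym : symmetric e.
Variable p : {ffun T -> option T}.
Hypothesis p_forest : forest p.
Hypothesis p_closure : in_closure e p.

Local Notation depth := (depth p).
Local Notation le_anc := (le_anc p).

Definition is_path (S : seq T) : bool := if S is x0 :: Q then path e x0 Q else true.

Lemma is_path_split S1 r S2 : is_path (S1 ++ r :: S2) -> is_path S1 /\ is_path S2.
Proof.
have H2 : path e r S2 -> is_path S2 by case: S2 => //= z S2 /andP[].
case: S1 => [|x0 S1] /=; first by move/H2.
by rewrite cat_path /= => /and3P[-> _ /H2].
Qed.

Lemma shallowest_exists (S : seq T) x0 :
  x0 \in S -> exists2 r, r \in S & forall z, z \in S -> depth r <= depth z.
Proof. by move=> xS; case: (arg_minnP depth xS) => r rS r_min; exists r. Qed.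

Lemma le_anc_edge r u v : le_anc r u -> e u v -> depth r <= depth v -> le_anc r v.
Proof.
move=> ru euv rv.
have := closure_edge p_closure euv; rewrite !(ancE p_forest) => /orP[/andP[uv _]|/andP[vu _]].
  exact: le_anc_trans ru uv.
exact: (le_anc_chain p_forest (y := u)).
Qed.

Lemma le_anc_along_path r c l : le_anc r c -> path e c l ->
  (forall z, z \in l -> depth r <= depth z) -> forall z, z \in l -> le_anc r z.
Proof.
elim: l c => [|a l IH] c // rc /= /andP[eca pl] H z.
have ra : le_anc r a by apply: le_anc_edge rc eca _; apply: H; rewrite inE eqxx.
rewrite inE => /orP[/eqP -> //|zl].
by apply: (IH a) => // w wl; apply: H; rewrite inE wl orbT.
Qed.

Lemma shallowest_le_anc r S : r \in S -> is_path S ->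
  (forall z, z \in S -> depth r <= depth z) -> forall z, z \in S -> le_anc r z.
Proof.
elim: S => [|x0 Q IH] //= rS pS H.
case: (boolP (le_anc r x0)) => h.
  move=> z; rewrite inE => /orP[/eqP -> //|]; apply: (le_anc_along_path h pS).
  by move=> w wQ; apply: H; rewrite inE wQ orbT.
have rQ : r \in Q.
  by move: rS; rewrite inE => /orP[/eqP E|//]; move: h; rewrite E le_anc_refl.
case: Q IH pS rQ H {rS} => [|a Q] IH pS rQ H //.
case/andP: pS => ea pQ.
have HQ : forall z, z \in a :: Q -> le_anc r z.
  by apply: IH => // z zQ; apply: H; rewrite inE zQ orbT.
have rx0 : le_anc r x0.
  apply: (le_anc_edge (HQ a (mem_head _ _))); first by rewrite e_sym.
  by apply: H; rewrite mem_head.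
by rewrite rx0 in h.
Qed.

Lemma count_anc_le_depth (S : seq T) z : uniq S -> count (anc p ^~ z) S <= depth z.
Proof.
move=> uS; rewrite -size_filter /depth.
rewrite -(card_uniqP (filter_uniq _ uS)); apply: subset_leq_card; apply/subsetP=> u.
by rewrite mem_filter inE => /andP[].
Qed.

Lemma deep_vertex_on_path n S : size S = n.+1 -> uniq S -> is_path S ->
  exists2 z, z \in S & up_log 2 n.+2 <= (count (anc p ^~ z) S).+1.
Proof.
elim/ltn_ind: n S => n IH S sS uS pS.
have [r rS r_min] : exists2 r, r \in S & forall z, z \in S -> depth r <= depth z.
  by case: S sS {uS pS} => // x0 Q _; exact: (shallowest_exists (mem_head x0 Q)).
have r_le_anc := shallowest_le_anc rS pS r_min.
case/splitPr: rS sS uS pS r_le_anc {r_min} => S1 S2 sS uS pS r_le_anc.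
move: sS; rewrite size_cat /= addnS => -[sS].
have [p1 p2] := is_path_split pS.
move: (uS); rewrite cat_uniq /= negb_or => /and3P[u1 /andP[rS1 _] /andP[rS2 u2]].
(* r lies strictly above every other vertex of the path *)
have count_split z : z \in S1 ++ S2 ->
    count (anc p ^~ z) (S1 ++ r :: S2) = (count (anc p ^~ z) (S1 ++ S2)).+1.
  move=> zS; rewrite !count_cat /= (ancE p_forest) r_le_anc; last first.
    by move: zS; rewrite !mem_cat inE => /orP[->|->]; rewrite ?orbT.
  have -> : r != z by apply: contraTneq zS => <-; rewrite mem_cat negb_or rS1.
  by rewrite addnS.
(* recurse into the longer of the two halves left after removing r *)
have [P HP sP] : exists2 P, P = S1 \/ P = S2 & n <= (size P).*2.
  case: (leqP (size S2) (size S1)) => h.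
    by exists S1; [left | rewrite -sS -addnn leq_add2l].
  by exists S2; [right | rewrite -sS -addnn leq_add2r ltnW].
have [uP pP] : uniq P /\ is_path P by case: HP => ->.
have PS z : z \in P -> z \in S1 ++ S2 by case: HP => -> zP; rewrite mem_cat zP ?orbT.
have countP z : count (anc p ^~ z) P <= count (anc p ^~ z) (S1 ++ S2).
  by case: HP => ->; rewrite count_cat ?leq_addr ?leq_addl.
case: P HP sP uP pP PS countP => [|z0 P'] HP sP uP pP PS countP.
  by exists r; rewrite ?mem_cat ?mem_head ?orbT //; move: sP; rewrite /= leqn0 => /eqP ->.
have sP' : size P' < n by case: HP => E; rewrite -sS -E /= (leq_addr, leq_addl).
have [z zP Hz] := IH _ sP' (z0 :: P') erefl uP pP.
exists z; first by have := PS z zP; rewrite !mem_cat inE => /orP[->|->]; rewrite ?orbT.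
rewrite count_split ?PS //.
have log_half : up_log 2 n.+2 <= (up_log 2 (size P').+2).+1.
  by rewrite -up_log2_double //; apply: leq_up_log; rewrite doubleS !ltnS.
by apply: leq_trans log_half _; rewrite ltnS; apply: leq_trans Hz _; rewrite ltnS.
Qed.

Lemma deep_vertex_on_cycle L s :
  is_cycle_of_length e s L -> exists z, (up_log 2 L).+1 <= fdepth p z.
Proof.
case=> us sL L3 cs.
have [r rs r_min] : exists2 r, r \in s & forall z, z \in s -> depth r <= depth z.
  case: s us sL L3 cs => [|x0 Q] _ sL L3 _; first by rewrite -sL in L3.
  exact: shallowest_exists (mem_head x0 Q).
case/rot_to: rs => i Q E.
have c' : cycle e (r :: Q) by rewrite -E rot_cycle.
have u' : uniq (r :: Q) by rewrite -E rot_uniq.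
have sQ : (size Q).+1 = L by rewrite -sL -(size_rot i s) E.
have pQ : is_path (r :: Q) by move: c'; rewrite /= rcons_path => /andP[].
have r_min' z : z \in r :: Q -> depth r <= depth z by rewrite -E mem_rot; exact: r_min.
have r_le_anc := shallowest_le_anc (mem_head r Q) pQ r_min'.
have szQ : size Q = (L - 2).+1 by lia.
have [z zQ Hz] := deep_vertex_on_path szQ (subseq_uniq (subseq_cons Q r) u')
  (is_path_split (S1 := [::]) pQ).2.
rewrite (_ : (L - 2).+2 = L) in Hz; last lia.
have rz : anc p r z.
  rewrite (ancE p_forest) r_le_anc ?inE ?zQ ?orbT //=.
  by apply: contraTneq u' => ->; rewrite cons_uniq zQ.
exists z; rewrite /fdepth -/(depth z) ltnS.
have := count_anc_le_depth z u'; rewrite /= rz add1n.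
exact: leq_trans Hz.
Qed.

End LowerBound.

Lemma up_log2_lt n : 0 < n -> up_log 2 n < n.
Proof.
move=> n0; rewrite -(prednK n0) ltnS; apply: up_log_min => //.
exact: ltn_expl.
Qed.

Lemma bigmin_le (I : finType) (P : pred I) (F : I -> nat) idx i0 :
  P i0 -> \big[minn/idx]_(i | P i) F i <= F i0.
Proof.
move=> Pi0; elim: (index_enum I) (mem_index_enum i0) => // a r IH.
rewrite inE big_cons => /orP[/eqP <-|ir]; first by rewrite Pi0 geq_minl.
by case: ifP => _; [exact: leq_trans (geq_minr _ _) (IH ir) | exact: IH].
Qed.

Lemma td_lower_bound (T : finType) (e : rel T) (L : nat) :
  symmetric e -> (exists s, is_cycle_of_length e s L) -> 1 + up_log 2 L <= td e.
Proof.
move=> e_sym [s cycle_s]; rewrite /td add1n.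
apply: (big_ind (fun m => up_log 2 L < m)).
- have [us sL L3 _] := cycle_s.
  have L_le_T : L <= #|T| by rewrite -sL -(card_uniqP us) max_card.
  exact: leq_trans (up_log2_lt (leq_trans _ L3)) L_le_T.
- by move=> a b ha hb; rewrite leq_min ha hb.
move=> q /andP[q_forest q_closure].
have [z Hz] := deep_vertex_on_cycle e_sym q_forest q_closure cycle_s.
exact: leq_trans Hz (leq_bigmax z).
Qed.

Lemma td_upper_bound (T : finType) (e : rel T) (L : nat) :
  symmetric e -> irreflexive e ->
  (forall v x y : T, x != v -> y != v -> connect (del_vertex e v) x y) ->
  (forall s n, is_cycle_of_length e s n -> n <= L) -> td e <= 'C(L.-1, 2) + 2.
Proof.
move=> e_sym e_irr two_conn cycle_le_L.
have [p /and3P[p_forest p_edges p_closure]] := normal_forest_exists e_sym e_irr.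
have p_admissible : forest p && in_closure e p by rewrite p_forest.
rewrite /td; apply: leq_trans (bigmin_le (@fheight T) #|T| p_admissible) _.
apply/bigmax_leqP => y _; rewrite /fdepth -/(depth p y) addn2 ltnS -addn1.
exact: (depth_le_binomial e_sym p_forest p_edges p_closure y two_conn cycle_le_L).
Qed.

Theorem mainTheorem2 (T : finType) (e : rel T) (L : nat) :
  simple_graph e -> two_connected e -> max_cycle_length e L ->
  1 + up_log 2 L <= td e <= 'C(L.-1, 2) + 2.
Proof.
case=> e_sym e_irr [_ _ two_conn] [longest_cycle cycle_le_L].
by rewrite td_lower_bound ?td_upper_bound.
Qed.
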